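(* Consider the algorithm described below (Algorithm A) for a real Hilbert space $H$, a nonempty closed convex set $C\subseteq H$ and a mapping $F\colon H\to H$ that is monotone and Lipschitz continuous with constant $L>0$, where the solution set $S$ of the variational inequality ''find $x^*\in C$ with $\langle F(x^* ),x-x^*\rangle\ge0$ for all $x\in C$'' is nonempty. Let $(x_n)$, $(y_n)$, $(\lambda_n)$ be the sequences generated by Algorithm A (with their final values after any modification in Step 4), with $\alpha\in(0,\sqrt2-1)$, and let $z\in S$. Then for every $n\ge1$, $$\|x_{n+1}-z\|^2\le\|x_n-z\|^2-(1-\alpha(1+\sqrt2))\|x_n-y_n\|^2-(1-\sqrt2\alpha)\|x_{n+1}-y_n\|^2+\alpha\|x_n-y_{n-1}\|^2-2\lambda_n\langle F(z),y_n-z\rangle.$$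
   Context: Convention: $0/0=+\infty$ and $1/0=+\infty$. $P_C$ is the metric projection onto $C$. Algorithm A: Step 1. Choose $x_0\in C$, $\lambda_{-1}>0$, $\theta_0=1$, $\alpha\in(0,\sqrt2-1)$ and $\bar\lambda>0$. Compute $y_0=P_C(x_0-\lambda_{-1}F(x_0))$, $\lambda_0=\min\{\alpha\|x_0-y_0\|/\|F(x_0)-F(y_0)\|,\bar\lambda\}$, $x_1=P_C(x_0-\lambda_0F(y_0))$. Step 2 (for $n\ge1$). Set $\theta_n=1$ and define, for $y\in H$, $\theta>0$, $\lambda(y,\theta)=\min\{\alpha\|y-y_{n-1}\|/\|F(y)-F(y_{n-1})\|,\ \frac{1+\theta_{n-1}}{\theta}\lambda_{n-1},\ \bar\lambda\}$. Compute $y_n=2x_n-x_{n-1}$, $\lambda_n=\lambda(y_n,\theta_n)$, $x_{n+1}=P_C(x_n-\lambda_nF(y_n))$. Step 3. If $\|y_n-P_C(x_n-\lambda_nF(y_n))\|+\|x_n-y_n\|=0$, stop ($x_n$ is a solution). Otherwise compute $t_n=-\|x_{n+1}-x_n\|^2+2\lambda_n\langle F(y_n),y_n-x_{n+1}\rangle+(1-\alpha(1+\sqrt2))\|x_n-y_n\|^2-\alpha\|x_n-y_{n-1}\|^2+(1-\sqrt2\alpha)\|x_{n+1}-y_n\|^2$. Step 4. If $t_n\le0$, go to Step 2 with $n:=n+1$. Otherwise: (i) if $\lambda_n\ge\lambda_{n-1}$, choose $\lambda_n'\in[\lambda_{n-1},\lambda_n]$ with $\|\lambda_n'F(y_n)-\lambda_{n-1}F(y_{n-1})\|\le\alpha\|y_n-y_{n-1}\|$,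 recompute $x_{n+1}=P_C(x_n-\lambda_n'F(y_n))$, set $\lambda_n:=\lambda_n'$, $n:=n+1$, go to Step 2; (ii) if $\lambda_n<\lambda_{n-1}$, find $\theta_n'\in(0,1]$ such that, with $y_n'=x_n+\theta_n'(x_n-x_{n-1})$, one has $\lambda(y_n',\theta_n')\ge\theta_n'\lambda_{n-1}$; then choose $\lambda_n'\in[\theta_n'\lambda_{n-1},\lambda(y_n',\theta_n')]$ with $\|\lambda_n'F(y_n')-\theta_n'\lambda_{n-1}F(y_{n-1})\|\le\alpha\|y_n'-y_{n-1}\|$, recompute $x_{n+1}=P_C(x_n-\lambda_n'F(y_n'))$, set $\lambda_n:=\lambda_n'$, $\theta_n:=\theta_n'$, $y_n:=y_n'$, $n:=n+1$, go to Step 2. *)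

From HB Require Import structures.
From mathcomp Require Import all_boot all_order all_algebra.
From mathcomp Require Import all_classical all_reals all_analysis.
Set Implicit Arguments. Unset Strict Implicit. Unset Printing Implicit Defensive.
Import Order.TTheory GRing.Theory Num.Theory.
Import numFieldNormedType.Exports.
Local Open Scope classical_set_scope.
Local Open Scope ring_scope.

(* A real Hilbert space: a complete normed space H over R whose norm comes from
   the inner product ip (symmetric, linear in the first argument, <x,x> = |x|^2). *)
Definition is_inner_product (R : realType) (H : normedModType R)
  (ip : H -> H -> R) : Prop :=
  [/\ (forall x y, ip x y = ip y x),
      (forall (a : R) x y z, ip (a *: x + y) z = a * ip x z + ip y z) &
      (forall x, ip x x = `|x| ^+ 2)].

Definition monotone_op (R : realType) (H : normedModType R)
  (ip : H -> H -> R) (F : H -> H) : Prop :=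
  forall x y, 0 <= ip (F x - F y) (x - y).

Definition lipschitz_op (R : realType) (H : normedModType R)
  (F : H -> H) (L : R) : Prop :=
  forall x y, `|F x - F y| <= L * `|x - y|.

Definition VI_sol (R : realType) (H : normedModType R)
  (ip : H -> H -> R) (C : set H) (F : H -> H) (z : H) : Prop :=
  C z /\ forall x, C x -> 0 <= ip (F z) (x - z).

Definition is_proj (R : realType) (H : normedModType R) (C : set H) (v p : H) : Prop :=
  C p /\ forall c, C c -> `|v - p| <= `|v - c|.

Definition projC (R : realType) (H : normedModType R) (C : set H) (v : H) : H :=
  xget v [set p | is_proj C v p].

(* min{a/b, c} with the convention a/0 = +oo (a >= 0 in all uses) *)
Definition min_div (R : realType) (a b c : R) : R :=
  if b == 0 then c else Num.min (a / b) c.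

Section AlgA.
Variables (R : realType) (H : normedModType R) (ip : H -> H -> R)
  (C : set H) (F : H -> H) (alpha lbar : R)
  (x y : nat -> H) (lam theta : nat -> R).

(* Step 1 (with lam_m1 = lambda_{-1}) *)
Definition AlgA_init (lam_m1 : R) : Prop :=
  [/\ C (x 0%N), theta 0%N = 1,
      y 0%N = projC C (x 0%N - lam_m1 *: F (x 0%N)),
      lam 0%N = min_div (alpha * `|x 0%N - y 0%N|) `|F (x 0%N) - F (y 0%N)| lbar &
      x 1%N = projC C (x 0%N - lam 0%N *: F (y 0%N))].

(* lambda(u, th) at iteration n (uses final values at index n-1) *)
Definition AlgA_lam (n : nat) (u : H) (th : R) : R :=
  min_div (alpha * `|u - y n.-1|) `|F u - F (y n.-1)|
    (Num.min ((1 + theta n.-1) / th * lam n.-1) lbar).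

(* tentative values of Step 2 *)
Definition AlgA_y2 (n : nat) : H := 2%:R *: x n - x n.-1.
Definition AlgA_l2 (n : nat) : R := AlgA_lam n (AlgA_y2 n) 1.
Definition AlgA_x2 (n : nat) : H := projC C (x n - AlgA_l2 n *: F (AlgA_y2 n)).

Definition AlgA_stop (n : nat) : Prop :=
  `|AlgA_y2 n - AlgA_x2 n| + `|x n - AlgA_y2 n| = 0.

Definition AlgA_t (n : nat) : R :=
  let y2 := AlgA_y2 n in let l2 := AlgA_l2 n in let x2 := AlgA_x2 n in
  - `|x2 - x n| ^+ 2 + 2%:R * l2 * ip (F y2) (y2 - x2)
  + (1 - alpha * (1 + Num.sqrt 2%:R)) * `|x n - y2| ^+ 2
  - alpha * `|x n - y n.-1| ^+ 2
  + (1 - Num.sqrt 2%:R * alpha) * `|x2 - y2| ^+ 2.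

(* final values of iteration n (n >= 1) after Steps 2-4 *)
Definition AlgA_step (n : nat) : Prop :=
  if `[< AlgA_stop n \/ AlgA_t n <= 0 >] then
    [/\ theta n = 1, y n = AlgA_y2 n, lam n = AlgA_l2 n & x n.+1 = AlgA_x2 n]
  else if lam n.-1 <= AlgA_l2 n then
    [/\ theta n = 1, y n = AlgA_y2 n, lam n.-1 <= lam n <= AlgA_l2 n,
        `|lam n *: F (y n) - lam n.-1 *: F (y n.-1)| <= alpha * `|y n - y n.-1| &
        x n.+1 = projC C (x n - lam n *: F (y n))]
  else
    [/\ 0 < theta n <= 1 /\ y n = x n + theta n *: (x n - x n.-1),
        theta n * lam n.-1 <= AlgA_lam n (y n) (theta n),
        theta n * lam n.-1 <= lam n <= AlgA_lam n (y n) (theta n),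
        `|lam n *: F (y n) - (theta n * lam n.-1) *: F (y n.-1)|
           <= alpha * `|y n - y n.-1| &
        x n.+1 = projC C (x n - lam n *: F (y n))].

(* (x,y,lam,theta) is a run of Algorithm A (iterations performed until it stops) *)
Definition AlgA_run (lam_m1 : R) : Prop :=
  AlgA_init lam_m1 /\
  forall n : nat, (1 <= n)%N -> (forall k, (1 <= k < n)%N -> ~ AlgA_stop k) ->
    AlgA_step n.

End AlgA.

From HB Require Import structures.
From mathcomp Require Import all_boot all_order all_algebra.
From mathcomp Require Import all_classical all_reals all_analysis.
From mathcomp Require Import ring lra.
Import Order.TTheory GRing.Theory Num.Theory.
Import numFieldNormedType.Exports.
Local Open Scope classical_set_scope.
Local Open Scope ring_scope.

(* Testing the projection x_{n+1} = P_C(x_n - lam_n F y_n) against z, and using the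
   monotonicity of F between y_n and z, bounds |x_{n+1} - z|^2 by the right-hand side
   plus the Step 3 quantity t_n evaluated at the final iterates; so it suffices that this
   quantity is nonpositive.  When Step 3 accepts, that is the test itself.  Otherwise
   Step 4 makes y_n = x_n + theta_n (x_n - x_{n-1}); testing the projection that produced
   x_n against x_{n-1} and x_{n+1} bounds t_n by a cross term
   2 <y_n - x_{n+1}, lam_n F y_n - theta_n lam_{n-1} F y_{n-1}>, which the step-size
   condition and Young's inequality with weight sqrt 2 alpha absorb.  The metric
   projection exists by the usual minimizing-sequence argument, which is Cauchy by the
   parallelogram law. *)

Set Implicit Arguments. Unset Strict Implicit. Unset Printing Implicit Defensive.

Lemma sqr_addr_le_sqrt2 (R : rcfType) (A B : R) :
  (A + B) ^+ 2 <= (2%:R + Num.sqrt 2%:R) * A ^+ 2 + Num.sqrt 2%:R * B ^+ 2.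
Proof.
set r := Num.sqrt 2%:R.
have r2 : r ^+ 2 = 2%:R by rewrite sqr_sqrtr ?ler0n.
have r_gt1 : 1 < r by rewrite -sqrtr1 ltr_sqrt ?ltr01 ?ltr1n.
(* multiplied by r - 1, the difference is the square (A - (r - 1) B)^2 *)
have := sqr_ge0 (A - (r - 1) * B).
nra.
Qed.

Section InnerProduct.
Variables (R : realType) (H : normedModType R) (ip : H -> H -> R).
Hypothesis hip : is_inner_product ip.

Lemma ipC x y : ip x y = ip y x.
Proof. by case: hip. Qed.

Lemma ipZDl a x y z : ip (a *: x + y) z = a * ip x z + ip y z.
Proof. by case: hip. Qed.

Lemma ipnn x : ip x x = `|x| ^+ 2.
Proof. by case: hip. Qed.

Lemma ipDl x y z : ip (x + y) z = ip x z + ip y z.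
Proof. by rewrite -{1}[x]scale1r ipZDl mul1r. Qed.

Lemma ipZl a x z : ip (a *: x) z = a * ip x z.
Proof.
have ip0 : ip 0 z = 0 by have := ipDl 0 0 z; rewrite addr0; lra.
by rewrite -[a *: x]addr0 ipZDl ip0 addr0.
Qed.

Lemma ipNl x z : ip (- x) z = - ip x z.
Proof. by rewrite -scaleN1r ipZl mulN1r. Qed.

Lemma ipBl x y z : ip (x - y) z = ip x z - ip y z.
Proof. by rewrite ipDl ipNl. Qed.

Lemma ipDr x y z : ip z (x + y) = ip z x + ip z y.
Proof. by rewrite ipC ipDl !(ipC z). Qed.

Lemma ipZr a x z : ip z (a *: x) = a * ip z x.
Proof. by rewrite ipC ipZl ipC. Qed.

Lemma ipNr x z : ip z (- x) = - ip z x.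
Proof. by rewrite ipC ipNl ipC. Qed.

Lemma ipBr x y z : ip z (x - y) = ip z x - ip z y.
Proof. by rewrite ipDr ipNr. Qed.

Definition ip_linE := (ipDl, ipDr, ipNl, ipNr, ipZl, ipZr).

Lemma sqr_normD x y : `|x + y| ^+ 2 = `|x| ^+ 2 + 2%:R * ip x y + `|y| ^+ 2.
Proof. by rewrite -!ipnn ipDl !ipDr (ipC y x); ring. Qed.

Lemma sqr_normB x y : `|x - y| ^+ 2 = `|x| ^+ 2 - 2%:R * ip x y + `|y| ^+ 2.
Proof. by rewrite sqr_normD ipNr normrN; ring. Qed.

Lemma parallelogram_law (v x y : H) :
  `|x - y| ^+ 2 =
  2%:R * `|v - x| ^+ 2 + 2%:R * `|v - y| ^+ 2
  - 4%:R * `|v - (y + 2%:R^-1 *: (x - y))| ^+ 2.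
Proof.
rewrite -!ipnn !ip_linE (ipC y x) (ipC y v) (ipC x v).
by field.
Qed.

Lemma ip_le_sqrt2_young (u w : H) (al A B : R) : 0 < al -> `|w| <= al * (A + B) ->
  2%:R * ip u w <= Num.sqrt 2%:R * al * `|u| ^+ 2
                   + al * (1 + Num.sqrt 2%:R) * A ^+ 2 + al * B ^+ 2.
Proof.
set r := Num.sqrt 2%:R => al_gt0 w_le.
have r_gt0 : 0 < r by rewrite sqrtr_gt0 ltr0n.
have r2 : r ^+ 2 = 2%:R by rewrite sqr_sqrtr ?ler0n.
have young : 2%:R * (r * al) * ip u w <= (r * al) ^+ 2 * `|u| ^+ 2 + `|w| ^+ 2.
  have := sqr_normB ((r * al) *: u) w.
  rewrite normrZ exprMn ipZl real_normK ?num_real //.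
  by have := sqr_ge0 `|(r * al) *: u - w|; lra.
have w2 : `|w| ^+ 2 <= al ^+ 2 * (A + B) ^+ 2.
  by rewrite -exprMn ler_pXn2r ?nnegrE // (le_trans _ w_le).
have AB := ler_wpM2l (sqr_ge0 al) (sqr_addr_le_sqrt2 A B).
rewrite -(ler_pM2l (mulr_gt0 r_gt0 al_gt0)) -/r.
have -> : r * al * (r * al * `|u| ^+ 2 + al * (1 + r) * A ^+ 2 + al * B ^+ 2) =
    (r * al) ^+ 2 * `|u| ^+ 2 + al ^+ 2 * ((2%:R + r) * A ^+ 2 + r * B ^+ 2).
  by rewrite -r2; ring.
rewrite mulrCA mulrA (le_trans young) // lerD2l.
exact: le_trans w2 AB.
Qed.

End InnerProduct.

Lemma convex_set_segment (R : realType) (H : normedModType R) (C : set H) (c p : H) (t : R) :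
  convex_set C -> C c -> C p -> 0 <= t <= 1 -> C (p + t *: (c - p)).
Proof.
move=> cvxC Cc Cp /andP[t0 t1].
have := cvxC c p (Itv01 t0 t1) (mem_set Cc) (mem_set Cp); rewrite inE.
by rewrite scalerBr addrCA -{2}[p]scale1r -scalerBl.
Qed.

Section Projection.
Variables (R : realType) (H : normedModType R) (ip : H -> H -> R).
Hypothesis hip : is_inner_product ip.
Variable C : set H.
Hypothesis cvxC : convex_set C.

Lemma is_proj_ip_le0 v p c : is_proj C v p -> C c -> ip (v - p) (c - p) <= 0.
Proof.
move=> [Cp minp] Cc; rewrite leNgt; apply/negP => a_gt0.
set a := ip (v - p) (c - p) in a_gt0.
set N := `|c - p| ^+ 2.
have N_ge0 : 0 <= N by rewrite exprn_ge0.
pose t := a / (N + a).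
have t_gt0 : 0 < t by rewrite divr_gt0 // ltr_wpDl.
have tNa : t * (N + a) = a by rewrite mulfVK // gt_eqF // ltr_wpDl.
have t_le1 : t <= 1 by rewrite ler_pdivrMr ?ltr_wpDl // mul1r lerDr.
have t01 : 0 <= t <= 1 by rewrite (ltW t_gt0).
have := minp _ (convex_set_segment cvxC Cc Cp t01).
rewrite opprD addrA => dist_le.
have : `|v - p| ^+ 2 <= `|v - p - t *: (c - p)| ^+ 2.
  by rewrite ler_pXn2r ?nnegrE.
rewrite [X in _ <= X](sqr_normB hip) normrZ exprMn (ipZr hip) ger0_norm ?(ltW t_gt0) // -/a -/N.
nra.
Qed.

Lemma near_minimizers_close (v c1 c2 : H) (d e : R) :
  (forall c, C c -> d <= `|v - c|) -> 0 <= d -> 0 <= e -> C c1 -> C c2 ->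
  `|v - c1| <= d + e -> `|v - c2| <= d + e ->
  `|c1 - c2| ^+ 2 <= 4%:R * e * (2%:R * d + e).
Proof.
move=> dlb d0 e0 Cc1 Cc2 c1e c2e.
have half01 : 0 <= (2%:R^-1 : R) <= 1 by apply/andP; split; lra.
have mid := dlb _ (convex_set_segment cvxC Cc1 Cc2 half01).
rewrite (parallelogram_law hip v).
have := normr_ge0 (v - c1); have := normr_ge0 (v - c2).
nra.
Qed.

End Projection.

Section ProjectionExists.
Variables (R : realType) (H : completeNormedModType R) (ip : H -> H -> R).
Hypothesis hip : is_inner_product ip.
Variable C : set H.
Hypotheses (cvxC : convex_set C) (C0 : C !=set0) (clC : closed C).

Lemma proj_exists v : exists p, is_proj C v p.
Proof.
have [c0 Cc0] := C0.
set D := [set `|v - c| | c in C].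
have infD : has_inf D by split; [exists `|v - c0|, c0 | exists 0 => _ [c _ <-]].
set d := inf D.
have dlb c : C c -> d <= `|v - c| by move=> Cc; apply: (ge_inf infD.2); exists c.
have d0 : 0 <= d by apply: lb_le_inf; [exact: infD.1 | move=> _ [c _ <-]].
have near_inf n : exists c, C c /\ `|v - c| < d + harmonic n.
  by have [_ [c Cc <-] ?] := inf_adherent (harmonic_gt0 n) infD; exists c.
have [cs cs_min] := choice near_inf.
have cs_cauchy : cauchy_ex (cs @ \oo).
  move=> eps eps0.
  pose del := Num.min 1 (eps ^+ 2 / (8%:R * (2%:R * d + 1))).
  have del0 : 0 < del by rewrite lt_min ltr01 divr_gt0 ?exprn_gt0 //; lra.
  have del1 : del <= 1 by rewrite ge_min lexx.
  have del_eps : del * (8%:R * (2%:R * d + 1)) <= eps ^+ 2.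
    by rewrite -ler_pdivlMr ?ge_min ?lexx ?orbT //; lra.
  have [N _ hN] := cvgr_lt _ cvg_harmonic _ del0.
  exists (cs N), N => // j /= Nj.
  rewrite -ball_normE /ball_ /=.
  have close := near_minimizers_close hip cvxC dlb d0 (ltW del0) (cs_min N).1 (cs_min j).1.
  have cs_del k : (N <= k)%N -> `|v - cs k| <= d + del.
    by move=> Nk; apply/ltW/(lt_trans (cs_min k).2); rewrite ltrD2l; exact: hN.
  have csN := cs_del N (leqnn N); have csj := cs_del j Nj.
  have := close csN csj; have := normr_ge0 (cs N - cs j); nra.
have cs_cvg : cs @ \oo --> limn cs by apply: cauchy_cvg; exact: cauchy_exP.
exists (limn cs); split.
  by apply: (closed_cvg _ clC _ _ cs_cvg); apply: nearW => n; exact: (cs_min n).1.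
have lim_le : `|v - limn cs| <= d + 0.
  apply: (ler_cvg_to (cvg_norm (cvgB (cvg_cst v) cs_cvg))
                     (cvgD (cvg_cst d) cvg_harmonic)).
  by apply: nearW => n /=; exact: ltW (cs_min n).2.
by rewrite addr0 in lim_le => c Cc; exact: le_trans lim_le (dlb _ Cc).
Qed.

Lemma is_proj_projC v : is_proj C v (projC C v).
Proof. exact: xgetPex (proj_exists v). Qed.

End ProjectionExists.

Section ProjectedStep.
Variables (R : realType) (H : normedModType R) (ip : H -> H -> R).
Hypothesis hip : is_inner_product ip.
Variables (C : set H) (F : H -> H).
Hypotheses (cvxC : convex_set C) (monF : monotone_op ip F).

Local Notation r := (Num.sqrt (2%:R : R)).

(* The quantity t_n of Step 3; [AlgA_t n] is it at the tentative values of Step 2. *)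
Definition step_residual (al lam : R) (xn xn1 ym yn : H) : R :=
  - `|xn1 - xn| ^+ 2 + 2%:R * lam * ip (F yn) (yn - xn1)
  + (1 - al * (1 + r)) * `|xn - yn| ^+ 2 - al * `|xn - ym| ^+ 2
  + (1 - r * al) * `|xn1 - yn| ^+ 2.

Lemma proj_step_dist_le (z xn xn1 yn : H) lam :
  is_proj C (xn - lam *: F yn) xn1 -> C z -> 0 <= lam ->
  `|xn1 - z| ^+ 2 <= `|xn - z| ^+ 2 - `|xn1 - xn| ^+ 2
     + 2%:R * lam * ip (F yn) (yn - xn1) - 2%:R * lam * ip (F z) (yn - z).
Proof.
move=> pj Cz lam_ge0.
have vi := is_proj_ip_le0 hip cvxC pj Cz.
have split_z : `|xn - z| ^+ 2 =
    `|xn - xn1| ^+ 2 + 2%:R * ip (xn - xn1) (xn1 - z) + `|xn1 - z| ^+ 2.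
  by rewrite -(sqr_normD hip) addrA subrK.
have mono := mulr_ge0 lam_ge0 (monF yn z).
rewrite (distrC xn1 xn).
rewrite !(ipBl hip, ipBr hip, ipZl hip) in vi split_z mono *.
nra.
Qed.

Lemma inertial_proj_step_le (xm xn xn1 ym yn : H) lamm lam th :
  is_proj C (xm - lamm *: F ym) xn -> C xm -> C xn1 ->
  yn = xn + th *: (xn - xm) -> 0 <= th ->
  - `|xn1 - xn| ^+ 2 + 2%:R * lam * ip (F yn) (yn - xn1) <=
  - `|xn - yn| ^+ 2 - `|xn1 - yn| ^+ 2
  + 2%:R * ip (yn - xn1) (lam *: F yn - (th * lamm) *: F ym).
Proof.
move=> pj Cxm Cxn1 yE th_ge0.
(* yn - xn1 = (xn - xn1) + th (xn - xm): combine the tests of the projection at xn *)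
set w := xm - lamm *: F ym - xn.
have w_xn1 := is_proj_ip_le0 hip cvxC pj Cxn1.
have w_xm := is_proj_ip_le0 hip cvxC pj Cxm.
have w_ge0 : 0 <= ip w (yn - xn1).
  have -> : ip w (yn - xn1) = - ip w (xn1 - xn) - th * ip w (xm - xn).
    by rewrite yE !(ip_linE hip); ring.
  by rewrite -/w in w_xn1 w_xm; nra.
have bE : yn - xn = th *: (xn - xm) by rewrite yE addrAC subrr add0r.
have wE : th * ip w (yn - xn1) =
    - ip (yn - xn) (yn - xn1) - th * lamm * ip (F ym) (yn - xn1).
  by rewrite bE /w !(ip_linE hip); ring.
have -> : xn1 - xn = (yn - xn) - (yn - xn1) by rewrite opprB [RHS]addrC addrA subrK.
rewrite (sqr_normB hip) (distrC xn) (distrC xn1) (ipC hip (yn - xn1) (_ - _)).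
rewrite (ipBl hip) !(ipZl hip).
have := mulr_ge0 th_ge0 w_ge0.
nra.
Qed.

Lemma step_residual_inertial_le0 (xm xn xn1 ym yn : H) lamm lam th al :
  is_proj C (xm - lamm *: F ym) xn -> C xm -> C xn1 ->
  yn = xn + th *: (xn - xm) -> 0 <= th -> 0 < al ->
  `|lam *: F yn - (th * lamm) *: F ym| <= al * `|yn - ym| ->
  step_residual al lam xn xn1 ym yn <= 0.
Proof.
move=> pj Cxm Cxn1 yE th_ge0 al_gt0 step_le.
have := inertial_proj_step_le lam pj Cxm Cxn1 yE th_ge0.
have tri : `|yn - ym| <= `|xn - yn| + `|xn - ym|.
  by rewrite (distrC xn); exact: ler_distD.
have := ip_le_sqrt2_young hip (yn - xn1) al_gt0
          (le_trans step_le (ler_wpM2l (ltW al_gt0) tri)).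
rewrite /step_residual (distrC xn1 yn).
lra.
Qed.

Lemma step_residual_stop_le0 (xn xn1 ym yn : H) lam al :
  `|yn - xn1| + `|xn - yn| = 0 -> 0 <= al ->
  step_residual al lam xn xn1 ym yn <= 0.
Proof.
move=> stop al_ge0.
have [/eqP + /eqP] : `|yn - xn1| = 0 /\ `|xn - yn| = 0.
  by have := normr_ge0 (yn - xn1); have := normr_ge0 (xn - yn); split; lra.
rewrite !normr_eq0 !subr_eq0 => /eqP <- /eqP <-.
rewrite /step_residual (ipBr hip) !subrr normr0.
by have := mulr_ge0 al_ge0 (sqr_ge0 `|xn - ym|); lra.
Qed.

Lemma proj_step_dist_sol_le (z xn xn1 ym yn : H) lam al :
  is_proj C (xn - lam *: F yn) xn1 -> C z -> 0 <= lam ->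
  step_residual al lam xn xn1 ym yn <= 0 ->
  `|xn1 - z| ^+ 2 <= `|xn - z| ^+ 2
      - (1 - al * (1 + r)) * `|xn - yn| ^+ 2
      - (1 - r * al) * `|xn1 - yn| ^+ 2
      + al * `|xn - ym| ^+ 2
      - 2%:R * lam * ip (F z) (yn - z).
Proof.
move=> pj Cz lam_ge0; have := proj_step_dist_le pj Cz lam_ge0.
rewrite /step_residual; lra.
Qed.

End ProjectedStep.

Lemma min_div_ge0 (R : realType) (a b c : R) :
  0 <= a -> 0 <= b -> 0 <= c -> 0 <= min_div a b c.
Proof.
by move=> a0 b0 c0; rewrite /min_div; case: eqP => // _; rewrite le_min c0 divr_ge0.
Qed.

Section AlgAStep.
Variables (R : realType) (H : normedModType R) (ip : H -> H -> R).
Variables (C : set H) (F : H -> H) (alpha lbar : R).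
Variables (x y : nat -> H) (lam theta : nat -> R).
Hypotheses (alpha_gt0 : 0 < alpha) (lbar_gt0 : 0 < lbar).

Local Notation AlgA_step := (AlgA_step ip C F alpha lbar x y lam theta).

Lemma AlgA_step_proj k : AlgA_step k -> x k.+1 = projC C (x k - lam k *: F (y k)).
Proof.
rewrite /AlgA_step; case: asboolP => _; first by case=> _ -> -> ->.
by case: ifP => _ [].
Qed.

Lemma AlgA_step_ge0 k : AlgA_step k -> 0 <= lam k.-1 -> 0 <= theta k.-1 ->
  0 <= lam k /\ 0 <= theta k.
Proof.
move=> + lam_ge0 th_ge0; rewrite /AlgA_step; case: asboolP => _.
  case=> -> _ -> _; split => //.
  apply: min_div_ge0; rewrite ?mulr_ge0 ?(ltW alpha_gt0) //.
  by rewrite le_min (ltW lbar_gt0) divr1 mulr_ge0 // addr_ge0.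
case: ifP => _.
  by case=> -> _ /andP[lam_le _] _ _; split; [exact: le_trans lam_ge0 lam_le|].
case=> -[/andP[th_gt0 _] _] _ /andP[lam_le _] _ _; split; last exact: ltW.
exact: le_trans (mulr_ge0 (ltW th_gt0) lam_ge0) lam_le.
Qed.

Hypotheses (hip : is_inner_product ip) (cvxC : convex_set C).

Lemma AlgA_step_residual_le0 k :
  AlgA_step k -> is_proj C (x k.-1 - lam k.-1 *: F (y k.-1)) (x k) ->
  C (x k.-1) -> C (x k.+1) ->
  step_residual ip F alpha (lam k) (x k) (x k.+1) (y k.-1) (y k) <= 0.
Proof.
move=> + pj Cxm Cxn1; rewrite /AlgA_step; case: asboolP => [[stop|t_le0]|_].
- case=> _ yE _ xE; rewrite /AlgA_stop -yE -xE in stop.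
  exact: (step_residual_stop_le0 hip) stop (ltW alpha_gt0).
- by case=> _ yE lamE xE; rewrite /AlgA_t /= -yE -lamE -xE in t_le0.
case: ifP => _.
  case=> _ yE _ step_le _.
  have {}yE : y k = x k + 1 *: (x k - x k.-1).
    by rewrite yE /AlgA_y2 scale1r scaler_nat mulr2n addrA.
  rewrite -[lam k.-1]mul1r in step_le.
  exact: (step_residual_inertial_le0 hip cvxC) pj Cxm Cxn1 yE ler01 alpha_gt0 step_le.
case=> -[/andP[th_gt0 _] yE] _ _ step_le _.
exact: (step_residual_inertial_le0 hip cvxC) pj Cxm Cxn1 yE (ltW th_gt0) alpha_gt0 step_le.
Qed.

End AlgAStep.

Section AlgARun.
Variables (R : realType) (H : normedModType R) (ip : H -> H -> R).
Variables (C : set H) (F : H -> H) (alpha lbar lam_m1 : R).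
Variables (x y : nat -> H) (lam theta : nat -> R) (n : nat).
Hypotheses (alpha_gt0 : 0 < alpha) (lbar_gt0 : 0 < lbar).
Hypothesis run : AlgA_run ip C F alpha lbar x y lam theta lam_m1.
Hypothesis no_stop : forall k, (1 <= k < n)%N -> ~ AlgA_stop C F alpha lbar x y lam theta k.

Lemma AlgA_run_step k : (1 <= k <= n)%N -> AlgA_step ip C F alpha lbar x y lam theta k.
Proof.
case/andP=> k_ge1 k_le; apply: run.2 => // j /andP[j_ge1 j_lt].
by apply: no_stop; rewrite j_ge1 (leq_trans j_lt).
Qed.

Lemma AlgA_run_ge0 k : (k <= n)%N -> 0 <= lam k /\ 0 <= theta k.
Proof.
elim: k => [_ | k IHk k_lt].
  case: run.1 => _ -> _ -> _; split => //.
  by apply: min_div_ge0; rewrite ?mulr_ge0 ?(ltW alpha_gt0) ?(ltW lbar_gt0).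
have [lam_ge0 th_ge0] := IHk (ltnW k_lt).
have step : AlgA_step ip C F alpha lbar x y lam theta k.+1.
  by apply: AlgA_run_step; rewrite k_lt.
by have := AlgA_step_ge0 alpha_gt0 lbar_gt0 step; apply.
Qed.

Hypothesis projC_spec : forall v, is_proj C v (projC C v).

Lemma AlgA_run_is_proj k : (k <= n)%N -> is_proj C (x k - lam k *: F (y k)) (x k.+1).
Proof.
case: k => [_ | k k_lt]; first by case: run.1 => _ _ _ _ ->.
have step : AlgA_step ip C F alpha lbar x y lam theta k.+1.
  by apply: AlgA_run_step; rewrite k_lt.
by rewrite (AlgA_step_proj step).
Qed.

Lemma AlgA_run_mem k : (k <= n.+1)%N -> C (x k).
Proof.
case: k => [_ | k k_le]; first by case: run.1.
by case: (AlgA_run_is_proj k_le).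
Qed.

End AlgARun.

Unset Implicit Arguments.

Theorem lemma4p5 (R : realType) (H : completeNormedModType R)
  (ip : H -> H -> R) (C : set H) (F : H -> H) (L : R)
  (alpha lbar lam_m1 : R) (x y : nat -> H) (lam theta : nat -> R) (z : H) :
  is_inner_product ip ->
  C !=set0 -> closed C -> convex_set C ->
  monotone_op ip F -> 0 < L -> lipschitz_op F L ->
  (exists s, VI_sol ip C F s) ->
  0 < alpha < Num.sqrt 2%:R - 1 -> 0 < lbar -> 0 < lam_m1 ->
  AlgA_run ip C F alpha lbar x y lam theta lam_m1 ->
  VI_sol ip C F z ->
  forall n : nat, (1 <= n)%N ->
    (forall k, (1 <= k < n)%N -> ~ AlgA_stop C F alpha lbar x y lam theta k) ->
    `|x n.+1 - z| ^+ 2 <=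
      `|x n - z| ^+ 2
      - (1 - alpha * (1 + Num.sqrt 2%:R)) * `|x n - y n| ^+ 2
      - (1 - Num.sqrt 2%:R * alpha) * `|x n.+1 - y n| ^+ 2
      + alpha * `|x n - y n.-1| ^+ 2
      - 2%:R * lam n * ip (F z) (y n - z).
Proof.
move=> hip C0 clC cvxC monF _ _ _ /andP[alpha_gt0 _] lbar_gt0 _ run [Cz _] n n_ge1 no_stop.
have projC_spec := is_proj_projC hip cvxC C0 clC.
have is_proj_n := AlgA_run_is_proj run no_stop projC_spec.
have mem := AlgA_run_mem run no_stop projC_spec.
have [lam_ge0 _] := AlgA_run_ge0 alpha_gt0 lbar_gt0 run no_stop (leqnn n).
apply: (proj_step_dist_sol_le hip cvxC monF (is_proj_n n (leqnn n)) Cz lam_ge0).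
apply: (AlgA_step_residual_le0 alpha_gt0 hip cvxC (AlgA_run_step run no_stop _)).
- by rewrite n_ge1 leqnn.
- by have := is_proj_n n.-1 (leq_pred n); rewrite prednK.
- by apply: mem; rewrite (leq_trans (leq_pred n)).
- exact: mem.
Qed.
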